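(* Let $\mathbf{C}$ be a category all of whose morphisms are monomorphisms, enriched over $\mathbf{Top}$ with all homsets Hausdorff. Let $\mathbf{D}$ be a full subcategory of $\mathbf{C}$ which is a skeletal category of finite objects, and let $S \in \mathrm{Ob}(\mathbf{C})$ be universal for $\mathbf{D}$ and approximable in $\mathbf{D}$ via $F : \mathrm{Ob}(\mathbf{D}) \to \mathrm{Ob}(\mathbf{D})$ and $(\Phi_A)_{A \in \mathrm{Ob}(\mathbf{D})}$. Let $\mathfrak{G} = (G_A)_{A \in \mathrm{Ob}(\mathbf{C})}$ be a family of groups with $G_A \le \mathrm{Aut}_\mathbf{C}(A)$ for all $A$. Assume $\hom_\mathbf{C}(A,S)$ is locally compact second-countable Hausdorff for every $A \in \mathrm{Ob}(\mathbf{D})$. Then for every $A \in \mathrm{Ob}(\mathbf{D})$, $|G_A|$ and $|G_{F(A)}|$ are integers and $$t^\mathfrak{G}_\mathbf{D}(A) \le \frac{|G_{F(A)}|}{|G_A|}\cdot T^\mathfrak{G}_\mathbf{C}(F(A),S).$$ In particular, if $T^\mathfrak{G}_\mathbf{C}(A,S) < \infty$ for every $A \in \mathrm{Ob}(\mathbf{D})$, then $t^\mathfrak{G}_\mathbf{D}(A) < \infty$ for every $A \in \mathrm{Ob}(\mathbf{D})$.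
   Context: A category is enriched over $\mathbf{Top}$ if each homset is a topological space and composition is continuous. Skeletal: no two distinct objects are isomorphic. A category of finite objects is a locally small directed category whose morphisms are monomorphisms, whose skeleton has at most countably many objects, and in whose skeleton each object is the codomain of only finitely many morphisms. $S$ is universal for $\mathbf{D}$ if $\hom_\mathbf{C}(D,S)\ne\varnothing$ for all $D\in\mathrm{Ob}(\mathbf{D})$. $S$ is approximable in $\mathbf{D}$ via $F$ and $(\Phi_A)$ if each $\Phi_A:\hom_\mathbf{C}(F(A),S)\to\bigcup_{C\in\mathrm{Ob}(\mathbf{D})}\hom_\mathbf{D}(A,C)$ is Borel (preimages of open subsets of each $\hom_\mathbf{D}(A,C)$ are Borel) and for all $A,B\in\mathrm{Ob}(\mathbf{D})$, $f\in\hom_\mathbf{D}(A,B)$, $u\in\hom_\mathbf{C}(F(B),S)$ there is $f'\in\hom_\mathbf{D}(F(A),F(B))$ with $\Phi_A(u\cdot f')=\Phi_B(u)\cdot f$. $\mathrm{Aut}_\mathbf{C}(A)$ is the group of invertible morphisms $A\to A$. For $f,g\in\hom(A,X)$, $f\sim_\mathfrak{G}g$ iff $f=g\cdot\alpha$ for some $\alpha\in G_A$; $\binom{X}{A}_\mathfrak{G}=\hom(A,X)/{\sim_\mathfrak{G}}$ with the quotient topology; $w\cdot\binom{X}{A}_\mathfrak{G}=\{(w\cdot f)/{\sim_\mathfrak{G}}:f\in\hom(A,X)\}$. $t^\mathfrak{G}_\mathbf{D}(A)$ is the least positive integer $n$ such that for all $k\in\mathbb{N}$ and $B\in\mathrm{Ob}(\mathbf{D})$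 there is $C\in\mathrm{Ob}(\mathbf{D})$ such that every coloring $\chi:\binom{C}{A}_\mathfrak{G}\to\{0,\dots,k-1\}$ admits $w\in\hom(B,C)$ with $|\chi(w\cdot\binom{B}{A}_\mathfrak{G})|\le n$; $\infty$ if none. $T^\mathfrak{G}_\mathbf{C}(X,S)$ is the least positive integer $n$ such that for every $k\ge 2$ and every Borel coloring $\chi:\binom{S}{X}_\mathfrak{G}\to\{0,\dots,k-1\}$ (all fibers Borel) there is $w\in\hom(S,S)$ with $|\chi(w\cdot\binom{S}{X}_\mathfrak{G})|\le n$; $\infty$ if none. Arithmetic is in $\mathbb{N}_\infty=\{1,2,\dots,\infty\}$ with $n\cdot\infty=\infty$. *)

From HB Require Import structures.
From mathcomp Require Import all_boot all_order all_algebra generic_quotient.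
From mathcomp Require Import boolp classical_sets functions cardinality.
From mathcomp Require Import reals constructive_ereal ereal topology.
From mathcomp Require Import measurable_structure.

Set Implicit Arguments.
Unset Strict Implicit.
Unset Printing Implicit Defensive.

Import Order.TTheory GRing.Theory Num.Theory.
Local Open Scope classical_set_scope.

(* comp g f  stands for  g . f  (first f, then g).                      *)
Record TopCat := {
  Ob :> Type;
  hom : Ob -> Ob -> topologicalType;
  comp : forall A B D : Ob, hom B D -> hom A B -> hom A D;
  idm : forall A : Ob, hom A A;
  compA : forall (A B D E : Ob) (h : hom D E) (g : hom B D) (f : hom A B),
      comp h (comp g f) = comp (comp h g) f;
  comp1m : forall (A B : Ob) (f : hom A B), comp (idm B) f = f;
  compm1 : forall (A B : Ob) (f : hom A B), comp f (idm A) = f;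
  comp_continuous : forall A B D : Ob,
      continuous (fun p : hom B D * hom A B => comp p.1 p.2)
}.
Arguments comp {_ _ _ _} _ _.
Arguments idm {_} _.

Section Cat.
Variable C : TopCat.

Definition all_mono : Prop :=
  forall (A B D : C) (f : hom B D) (g h : hom A B), comp f g = comp f h -> g = h.

Definition is_iso (A B : C) (f : hom A B) : Prop :=
  exists g : hom B A, comp g f = idm A /\ comp f g = idm B.

(* A full subcategory D of C is given by the predicate inD on Ob(C);
   hom_D(A,B) = hom_C(A,B) for A, B in D. *)
Variable inD : C -> Prop.

Definition skeletal : Prop :=
  forall A B : C, inD A -> inD B -> (exists f : hom A B, is_iso f) -> A = B.

Definition directed : Prop :=
  forall A B : C, inD A -> inD B ->
    exists D : C, inD D /\ inhabited (hom A D) /\ inhabited (hom B D).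

(* D (being skeletal, it is its own skeleton) is a category of finite objects.
   Local smallness is automatic; monicity of morphisms comes from C. *)
Definition category_of_finite_objects : Prop :=
  directed /\
  (forall (A B D : C) (f : hom B D) (g h : hom A B),
      inD A -> inD B -> inD D -> comp f g = comp f h -> g = h) /\
  countable inD /\
  (forall B : C, inD B -> finite_set [set p : {A : C & hom A B} | inD (projT1 p)]).

Definition universal (S : C) : Prop :=
  forall A : C, inD A -> inhabited (hom A S).

Definition borel_set (T : topologicalType) (U : set T) : Prop :=
  <<s [set V : set T | open V] >> U.

(* S is approximable in D via F and (Phi_A)_A; Phi_A takes values in the
   disjoint union  \bigcup_{D in Ob(D)} hom_D(A, D). *)
Definition approximable (S : C) (F : C -> C)
    (Phi : forall A : C, hom (F A) S -> {B : C & hom A B}) : Prop :=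
  (forall A : C, inD A -> inD (F A)) /\
  (forall (A : C) (u : hom (F A) S), inD A -> inD (projT1 (Phi A u))) /\
  (forall A B : C, inD A -> inD B -> forall U : set (hom A B), open U ->
      borel_set [set u : hom (F A) S | exists2 f, U f & Phi A u = existT _ B f]) /\
  (forall (A B : C) (f : hom A B) (u : hom (F B) S), inD A -> inD B ->
      exists f' : hom (F A) (F B),
        Phi A (comp u f') = existT _ (projT1 (Phi B u)) (comp (projT2 (Phi B u)) f)).

End Cat.

Unset Implicit Arguments.
Record GroupFamily (C : TopCat) := {
  grp :> forall A : C, set (hom A A);
  grp_id : forall A : C, grp A (idm A);
  grp_comp : forall (A : C) (a b : hom A A), grp A a -> grp A b -> grp A (comp a b);
  grp_inv : forall (A : C) (a : hom A A), grp A a ->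
      exists2 b, grp A b & comp a b = idm A /\ comp b a = idm A
}.
Set Implicit Arguments.

Section Quot.
Local Open Scope quotient_scope.
Variables (C : TopCat) (G : GroupFamily C).

Definition simG_rel (A X : C) : rel (hom A X) :=
  fun f g => `[< exists2 a, G A a & f = comp g a >].

Lemma simG_refl A X : reflexive (@simG_rel A X).
Proof. move=> f; rewrite /simG_rel; apply/asboolP; exists (idm A); [exact: (grp_id C G) | by rewrite compm1]. Qed.

Lemma simG_sym1 A X (f g : hom A X) : @simG_rel A X f g -> @simG_rel A X g f.
Proof.
rewrite /simG_rel => /asboolP[a Ga ->]; apply/asboolP.
have [b Gb [ab ba]] := grp_inv C G A a Ga.
by exists b => //; rewrite -compA ab compm1.
Qed.

Lemma simG_sym A X : symmetric (@simG_rel A X).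
Proof. by move=> f g; apply/idP/idP => /simG_sym1. Qed.

Lemma simG_trans A X : transitive (@simG_rel A X).
Proof.
move=> g f h; rewrite /simG_rel => /asboolP[a Ga ->] /asboolP[b Gb ->]; apply/asboolP.
by exists (comp b a); [exact: (grp_comp C G) | rewrite compA].
Qed.

Definition simG (A X : C) : equiv_rel (hom A X) :=
  EquivRel (@simG_rel A X) (@simG_refl A X) (@simG_sym A X) (@simG_trans A X).

Definition binom (X A : C) : topologicalType :=
  quotient_topology {eq_quot (simG A X)}.

Definition cls (A X : C) (f : hom A X) : binom X A :=
  \pi_({eq_quot (simG A X)}) f.

End Quot.

Lemma exists_asbool (Q : nat -> Prop) : (exists n, Q n) -> exists n, `[< Q n >].
Proof. by case=> n h; exists n; apply/asboolP. Qed.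

Definition least (Q : nat -> Prop) : option nat :=
  match pselect (exists n, Q n) with
  | left h => Some (ex_minn (exists_asbool h))
  | right _ => None
  end.

(* elements of N_oo = {1,2,...,oo} embedded in the extended rationals *)
Definition to_ext (o : option nat) : \bar rat :=
  if o is Some n then ((n%:R : rat)%:E) else +oo%E.

(* cardinality of a finite set (only used for finite sets) *)
Definition set_card (T : Type) (X : set T) : nat :=
  odflt 0%N (least (fun n => (X #= `I_n)%card)).

Definition ncolors (C : TopCat) (G : GroupFamily C) (A B X : C) (k : nat)
    (chi : binom G X A -> 'I_k) (w : hom B X) : nat :=
  #|finset (fun i : 'I_k => `[< exists f : hom A B, chi (cls G (comp w f)) = i >])|.

Definition small_ramsey_deg (C : TopCat) (inD : C -> Prop) (G : GroupFamily C)
    (A : C) : \bar rat :=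
  to_ext (least (fun n => (0 < n)%N /\
    forall (k : nat) (B : C), inD B ->
      exists2 D : C, inD D &
        forall chi : binom G D A -> 'I_k,
          exists w : hom B D, (ncolors chi w <= n)%N)).

Definition big_ramsey_deg (C : TopCat) (G : GroupFamily C) (X S : C) : \bar rat :=
  to_ext (least (fun n => (0 < n)%N /\
    forall (k : nat), (2 <= k)%N ->
      forall chi : binom G S X -> 'I_k,
        (forall i : 'I_k, borel_set (chi @^-1` [set i])) ->
        exists w : hom S S, (ncolors chi w <= n)%N)).

Arguments approximable {C} inD S F Phi.
Arguments universal {C} inD S.
Arguments skeletal {C} inD.
Arguments category_of_finite_objects {C} inD.
Arguments small_ramsey_deg {C} inD G A.
Arguments big_ramsey_deg {C} G X S.

(* Fix k-colourings chi_D of binom(D, A) for all D in D.  Colour u : F(A) -> S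
   by the chi-colour of Phi_A(u) together with the position of Phi_A(u) in its
   G_A-orbit, and colour the class of u by the set of these colours along the
   orbit u . G_{F(A)}.  This colouring of binom(S, F(A)) is Borel: Phi_A is Borel
   into countably many finite discrete homsets, and in the quotient of a
   second-countable Hausdorff space by a finite group a set is Borel as soon as
   its preimage is, since the quotient map is open, and injective on the points
   of a basic open set U that are the only point of their orbit in U.
   If w : S -> S meets at most n classes, universality and approximability give
   for every B some h : B -> D whose colour-position pairs on h . hom(A, B) lie in
   at most n sets of size |G_{F(A)}|.  As G_A acts freely, every chi-colour
   occurs there with all |G_A| positions, so chi_D takes at most
   n |G_{F(A)}| / |G_A| values on h . binom(B, A).  Choosing every chi_D bad at
   once thus bounds t(A). *)

From mathcomp Require Import all_boot all_order ssralg ssrnum rat generic_quotient.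
From mathcomp Require Import boolp classical_sets cardinality.
From mathcomp Require Import constructive_ereal topology measurable_structure.
From Stdlib Require Eqdep.

Import Order.TTheory GRing.Theory Num.Theory.
Local Open Scope classical_set_scope.

Section BorelSets.
Context {T : topologicalType}.
Implicit Types U V : set T.

Lemma borel_open U : open U -> borel_set U.
Proof. exact: sub_sigma_algebra. Qed.

Lemma borel0 : borel_set (@set0 T).
Proof. exact: sigma_algebra0. Qed.

Lemma borelC U : borel_set U -> borel_set (~` U).
Proof. by rewrite -setTD; exact: sigma_algebraCD. Qed.

Lemma borel_bigcup (F : nat -> set T) :
  (forall n, borel_set (F n)) -> borel_set (\bigcup_n F n).
Proof. exact: sigma_algebra_bigcup. Qed.

Lemma borelU U V : borel_set U -> borel_set V -> borel_set (U `|` V).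
Proof.
move=> bU bV; rewrite (_ : U `|` V = \bigcup_n (if n is 0 then U else V)).
  by apply: borel_bigcup => -[].
apply/seteqP; split=> x; first by case=> ?; [exists 0%N | exists 1%N].
by case=> -[|n] _ ?; [left | right].
Qed.

Lemma borelI U V : borel_set U -> borel_set V -> borel_set (U `&` V).
Proof.
move=> bU bV; rewrite -[U `&` V]setCK setCI.
by apply: borelC; apply: borelU; exact: borelC.
Qed.

Lemma borelD U V : borel_set U -> borel_set V -> borel_set (U `\` V).
Proof. by move=> bU bV; rewrite setDE; apply: borelI => //; exact: borelC. Qed.

Lemma borel_bigcup_countable (I : Type) (P : set I) (F : I -> set T) :
  countable P -> (forall i, P i -> borel_set (F i)) ->
  borel_set (\bigcup_(i in P) F i).
Proof.
move=> /countable_injP[f finj] bF.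
pose E (n : nat) : set T :=
  if pselect (exists2 i, P i & f i = n) is left h then F (projT1 (cid2 h)) else set0.
rewrite (_ : \bigcup_(i in P) F i = \bigcup_n E n).
  apply: borel_bigcup => n; rewrite /E; case: pselect => [h|_]; last exact: borel0.
  by case: cid2 => i Pi _ /=; exact: bF.
apply/seteqP; split=> x.
  case=> i Pi Fx; exists (f i) => //; rewrite /E.
  case: pselect => [h|[]]; last by exists i.
  by case: cid2 => j Pj /= /finj ->; rewrite ?inE.
case=> n _; rewrite /E; case: pselect => [h|//].
by case: (cid2 h) => i Pi _ /= Fx; exists i.
Qed.

Lemma borel_bigcap_countable (I : Type) (P : set I) (F : I -> set T) :
  countable P -> (forall i, P i -> borel_set (F i)) ->
  borel_set (\bigcap_(i in P) F i).
Proof.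
move=> cP bF; rewrite -[X in borel_set X]setCK setC_bigcap; apply: borelC.
by apply: borel_bigcup_countable => // i Pi; apply: borelC; exact: bF.
Qed.

Lemma borel_preimage (T' : topologicalType) (f : T -> T') (V : set T') :
  continuous f -> borel_set V -> borel_set (f @^-1` V).
Proof.
move=> cf; apply: (@smallest_sub _ _ _ [set V | borel_set (f @^-1` V)]).
  split=> /=.
  - by rewrite preimage_set0; exact: borel0.
  - by move=> U bU; rewrite setTD preimage_setC; exact: borelC.
  - by move=> Fs bF; rewrite preimage_bigcup; exact: borel_bigcup.
by move=> U oU; apply: borel_open; move/continuousP: cf; apply.
Qed.

End BorelSets.

Section QuotientBorel.
Context {C : TopCat} {G : GroupFamily C} {A X : C}.
Implicit Types (x y : hom A X) (a : hom A A) (U O E : set (hom A X)).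
Local Notation cls := (@cls C G A X).

Lemma precomp_continuous a : continuous (fun x : hom A X => comp x a).
Proof.
move=> x; apply: (continuous_comp (f := fun y : hom A X => (y, a))
  (g := fun p : hom A X * hom A A => comp p.1 p.2)); last exact: comp_continuous.
by apply: cvg_pair => //; exact: cvg_cst.
Qed.

Lemma open_precomp a O : open O -> open ((fun x => comp x a) @^-1` O).
Proof. by move=> oO; move/continuousP: (precomp_continuous a); apply. Qed.

Lemma cls_eqP x y : cls x = cls y <-> exists2 a, G A a & x = comp y a.
Proof. by split=> [/eqmodP/asboolP | ?]; last by apply/eqmodP/asboolP. Qed.

Lemma cls_repr (q : binom G X A) : cls (repr q) = q.
Proof. exact: reprK. Qed.

Lemma cls_comp x a : G A a -> cls (comp x a) = cls x.
Proof. by move=> Ga; apply/cls_eqP; exists a. Qed.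

Lemma preimage_image_cls E :
  cls @^-1` (cls @` E) = \bigcup_(a in G A) ((fun x => comp x a) @^-1` E).
Proof.
apply/seteqP; split=> y.
  by case=> x Ex /cls_eqP[a Ga xE]; exists a => //=; rewrite -xE.
by case=> a Ga /= Eya; exists (comp y a) => //; exact: cls_comp.
Qed.

Lemma cls_open O : open O -> open (cls @` O).
Proof.
move=> oO; suff : open (cls @^-1` (cls @` O)) by [].
by rewrite preimage_image_cls; apply: bigcup_open => a _; exact: open_precomp.
Qed.

Hypotheses (finG : finite_set (G A)) (hausX : hausdorff_space (hom A X)).

Lemma open_not_fixed a : open [set x : hom A X | comp x a <> x].
Proof.
rewrite openE => x /= /eqP nx.
move: hausX; rewrite open_hausdorff => /(_ _ _ nx)[[O1 O2] /=].
rewrite !inE => -[O1x O2x] [oO1 oO2 O12]; rewrite /interior nbhsE.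
exists (O2 `&` ((fun y : hom A X => comp y a) @^-1` O1)).
  by split=> //; apply: openI => //; exact: open_precomp.
move=> y [O2y O1y] /= ya.
have : (O1 `&` O2) y by split=> //; rewrite -ya.
by rewrite O12.
Qed.

Definition sole_in U :=
  U `&` [set x | forall a, G A a -> U (comp x a) -> comp x a = x].

Definition shared_in U :=
  U `&` \bigcup_(a in G A)
    (((fun x => comp x a) @^-1` U) `&` [set x | comp x a <> x]).

Lemma open_shared_in U : open U -> open (shared_in U).
Proof.
move=> oU; apply: openI => //; apply: bigcup_open => a _.
by apply: openI; [exact: open_precomp | exact: open_not_fixed].
Qed.

Lemma sole_in_cls_inj {U y z} : sole_in U y -> sole_in U z -> cls y = cls z -> y = z.
Proof.
by move=> [Uy _] [_ sole_z] /cls_eqP[a Ga yE]; rewrite yE; apply: sole_z; rewrite -?yE.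
Qed.

Lemma image_sole_in U : cls @` sole_in U = cls @` U `\` cls @` shared_in U.
Proof.
apply/seteqP; split=> q.
  case=> x [Ux sole_x] <-; split; first by exists x.
  case=> y [Uy [b Gb [/= Uyb nyb]]] /cls_eqP[a Ga yE].
  have yx : y = x by rewrite yE; apply: sole_x => //; rewrite -yE.
  by apply: nyb; rewrite yx; apply: sole_x => //; rewrite -yx.
case=> -[x Ux <-] nshared; exists x => //; split=> // a Ga Uxa.
apply: contrapT => nxa; apply: nshared; exists x => //.
by split=> //; exists a.
Qed.

Lemma image_setI_sole_in U O :
  O `<=` U -> cls @` (O `&` sole_in U) = cls @` O `&` cls @` sole_in U.
Proof.
move=> OU; apply/seteqP; split=> q; first by case=> x [Ox sole_x] <-; split; exists x.
case=> -[o Oo <-] [p [Up sole_p]] /esym/cls_eqP[a Ga oE].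
have op : o = p by rewrite oE; apply: sole_p => //; rewrite -oE; exact: OU.
by exists p; [split; [rewrite -op | split] | rewrite op].
Qed.

Lemma basis_sole_in {B : set (set (hom A X))} :
  basis B -> forall x, exists2 U, B U & sole_in U x.
Proof.
case=> _ Bx x.
pose orbit_moves := (fun a => comp x a) @` (G A `&` [set a | comp x a <> x]).
have closed_moves : closed orbit_moves.
  move: (hausdorff_accessible hausX) => /accessible_finite_set_closed; apply.
  by apply: finite_image; apply: sub_finite_set finG; exact: subIsetl.
have : nbhs x (~` orbit_moves).
  apply: open_nbhs_nbhs; split; first exact: closed_openC.
  by case=> a [_ nxa] xa.
case/Bx=> U [BU Ux] U_moves; exists U => //; split=> // a Ga Uxa.
by apply: contrapT => nxa; apply: (U_moves _ Uxa); exists a.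
Qed.

Lemma borel_image_sole_in U E :
  open U -> borel_set E -> borel_set (cls @` (E `&` sole_in U)).
Proof.
move=> oU; have borel_sole : borel_set (cls @` sole_in U).
  rewrite image_sole_in; apply: borelD; apply: borel_open; apply: cls_open => //.
  exact: open_shared_in.
move: E; apply: (@smallest_sub _ _ _ [set E | borel_set (cls @` (E `&` sole_in U))]).
  split=> /=.
  - by rewrite set0I image_set0; exact: borel0.
  - move=> E' bE'; rewrite (_ : _ @` _ = cls @` sole_in U `\` cls @` (E' `&` sole_in U)).
      exact: borelD.
    apply/seteqP; split=> q.
      case=> x [[_ nE'x] sole_x] <-; split; first by exists x.
      by case=> y [E'y sole_y] /(sole_in_cls_inj sole_y sole_x) yx; rewrite -yx in nE'x.
    case=> -[x sole_x <-] nx; exists x => //; split=> //; split=> // E'x.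
    by apply: nx; exists x.
  - by move=> F bF; rewrite setI_bigcupl image_bigcup; exact: borel_bigcup.
move=> O oO /=; rewrite (_ : O `&` sole_in U = (O `&` U) `&` sole_in U); last first.
  by rewrite -setIA; congr (_ `&` _); apply/seteqP; split=> x [] //; case.
rewrite image_setI_sole_in; last exact: subIsetr.
by apply: borelI => //; apply: borel_open; apply: cls_open; exact: openI.
Qed.

Lemma borel_quotient (V : set (binom G X A)) :
  @second_countable (hom A X) -> borel_set (cls @^-1` V) -> borel_set V.
Proof.
case=> B countB basisB bV.
have -> : V = \bigcup_(U in B) cls @` (cls @^-1` V `&` sole_in U).
  apply/seteqP; split=> [q Vq|q [U _ [x [Vx _] <-]] //].
  have [U BU sole_x] := basis_sole_in basisB (repr q).
  exists U => //; exists (repr q); last exact: cls_repr.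
  by split=> //=; rewrite cls_repr.
apply: borel_bigcup_countable => // U BU.
by apply: borel_image_sole_in => //; case: basisB => + _; apply.
Qed.

End QuotientBorel.

Lemma least_le (Q : nat -> Prop) t : Q t ->
  exists n, [/\ least Q = Some n, (n <= t)%N & Q n].
Proof.
move=> Qt; rewrite /least; case: pselect => [h|[]]; last by exists t.
case: ex_minnP => n /asboolP Qn min_n; exists n; split=> //.
by apply: min_n; apply/asboolP.
Qed.

Lemma leastP {Q : nat -> Prop} {n : nat} : least Q = Some n -> Q n.
Proof. by rewrite /least; case: pselect => // h [<-]; case: ex_minnP => m /asboolP. Qed.

Lemma to_ext_least_le (Q : nat -> Prop) t :
  Q t -> (to_ext (least Q) <= (t%:R : rat)%:E)%E.
Proof. by move=> /least_le[m [-> le_mt _]]; rewrite /= lee_fin ler_nat. Qed.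

Lemma set_cardP T (X : set T) : finite_set X -> (X #= `I_(set_card X))%card.
Proof.
case=> n Xn; rewrite /set_card.
by have [m [-> _ Xm]] := least_le (fun m => (X #= `I_m)%card) _ Xn.
Qed.

Lemma set_card_gt0 {T} {X : set T} {x : T} : finite_set X -> X x -> (0 < set_card X)%N.
Proof.
by move=> /set_cardP/card_set_bijP[f [f_fun _ _]] /f_fun; apply: leq_ltn_trans.
Qed.

Lemma finite_set_enum {T} {X : set T} : finite_set X ->
  exists d : 'I_(set_card X) -> T,
    [/\ injective d, forall j, X (d j) & forall x, X x -> exists j, d j = x].
Proof.
move=> /set_cardP/card_set_bijP[f [f_fun f_inj f_surj]].
have ex_preimage (j : 'I_(set_card X)) : exists2 x, X x & f x = j.
  by apply: f_surj; rewrite /= ltn_ord.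
pose d j := projT1 (cid2 (ex_preimage j)).
have dX j : X (d j) by rewrite /d; case: cid2.
have fd j : f (d j) = j by rewrite /d; case: cid2.
exists d; split=> //; first by move=> i j dij; apply: val_inj; rewrite /= -!fd dij.
by move=> x Xx; exists (Ordinal (f_fun x Xx)); apply: f_inj; rewrite ?inE ?fd.
Qed.

Lemma card_bigcup_le {T I : finType} (P : {set I}) (F : I -> {set T}) m :
  (forall i, i \in P -> #|F i| <= m)%N -> (#|(\bigcup_(i in P) F i)%SET| <= #|P| * m)%N.
Proof.
move=> le_Fm; rewrite -sum_nat_const.
apply: (big_ind2 (fun (X : {set T}) x => #|X| <= x)%N) => // [|X x Y y le_X le_Y].
  by rewrite cards0.
exact: leq_trans (leq_card_setU X Y).1 (leq_add le_X le_Y).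
Qed.

Section FiniteObjects.
Context {C : TopCat} {inD : C -> Prop} (finD : category_of_finite_objects inD).

Lemma finite_hom {A B : C} : inD A -> inD B -> finite_set [set: hom A B].
Proof.
case: finD => _ [_ [_ fin_into]] inA inB.
pose tag (f : hom A B) := existT (fun A0 => hom A0 B) A f.
rewrite (_ : setT = tag @^-1` [set p | inD (projT1 p)]); last by apply/seteqP; split.
apply: finite_preimage (fin_into B inB) => f f' _ _.
exact: Eqdep.EqdepTheory.inj_pair2.
Qed.

Lemma finite_grp (G : GroupFamily C) {A : C} : inD A -> finite_set (G A).
Proof. by move=> inA; apply: sub_finite_set (finite_hom inA inA). Qed.

Lemma open_hom {A B : C} (U : set (hom A B)) :
  hausdorff_space (hom A B) -> inD A -> inD B -> open U.
Proof.
move=> hausAB inA inB; rewrite -[U]setCK; apply: closed_openC.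
move: (hausdorff_accessible hausAB) => /accessible_finite_set_closed; apply.
exact: sub_finite_set (finite_hom inA inB).
Qed.

End FiniteObjects.

Section SmallFromBig.
Context {C : TopCat} {inD : C -> Prop} {S : C} {F : C -> C}
  {Phi : forall A : C, hom (F A) S -> {B : C & hom A B}} {G : GroupFamily C}.
Hypotheses (mono : all_mono C) (haus : forall A B : C, hausdorff_space (hom A B))
  (finD : category_of_finite_objects inD) (univ : universal inD S)
  (appr : approximable inD S F Phi).
Context {A : C} (inA : inD A).
Local Notation A' := (F A).
Hypothesis second_countable_A' : @second_countable (hom A' S).
Let inA' : inD A' := appr.1 A inA.
Local Notation g := (set_card (G A)).
Local Notation g' := (set_card (G A')).

Let g_gt0 : (0 < g)%N := set_card_gt0 (finite_grp finD G inA) (grp_id C G A).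

Context {dA : 'I_g -> hom A A} {dF : 'I_g' -> hom A' A'}.
Hypotheses (dA_inj : injective dA) (dA_grp : forall j, G A (dA j))
  (grp_dA : forall a, G A a -> exists j, dA j = a).
Hypotheses (dF_grp : forall j, G A' (dF j))
  (grp_dF : forall a, G A' a -> exists j, dF j = a).

Lemma orbit_index_ex {D : C} (phi : hom A D) :
  exists j, phi = comp (repr (cls G phi)) (dA j).
Proof.
have /cls_eqP[a /grp_dA[j <-] phiE] : cls G phi = cls G (repr (cls G phi)).
  by rewrite cls_repr.
by exists j.
Qed.

Definition orbit_index {D : C} (phi : hom A D) : 'I_g :=
  projT1 (cid (orbit_index_ex phi)).

Lemma orbit_indexP {D : C} (phi : hom A D) :
  phi = comp (repr (cls G phi)) (dA (orbit_index phi)).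
Proof. by rewrite /orbit_index; case: cid. Qed.

Lemma orbit_index_uniq {D : C} (phi : hom A D) j :
  phi = comp (repr (cls G phi)) (dA j) -> orbit_index phi = j.
Proof.
by move=> phiE; apply/dA_inj/(mono _ _ _ (repr (cls G phi))); rewrite -orbit_indexP.
Qed.

Lemma orbit_index_onto {D : C} (phi : hom A D) j :
  exists2 a, G A a & orbit_index (comp phi a) = j.
Proof.
have [b Gb [ib _]] := grp_inv C G A _ (dA_grp (orbit_index phi)).
exists (comp b (dA j)); first exact: grp_comp.
apply: orbit_index_uniq; rewrite cls_comp; last exact: grp_comp.
by rewrite {1}[phi]orbit_indexP !compA -(compA _ _ b) ib compm1.
Qed.

Section Colouring.
Context {k : nat} (chi : forall D : C, binom G D A -> 'I_k).
Local Notation colour := ('I_k * 'I_g)%type.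

Definition pos_colour {D : C} (phi : hom A D) : colour :=
  (chi D (cls G phi), orbit_index phi).

Definition approx_colour (u : hom A' S) : colour := pos_colour (projT2 (Phi A u)).

Definition orbit_colours (u : hom A' S) : {set colour} :=
  [set approx_colour (comp u (dF j)) | j : 'I_g'].

(* The offset [.+2] is there because [big_ramsey_deg] only quantifies over
   colourings with at least two colours. *)
Definition set_code (s : {set colour}) : 'I_(#|{set colour}|.+2) :=
  widen_ord (leqW (leqnSn _)) (enum_rank s).

Lemma set_code_inj : injective set_code.
Proof. by move=> s1 s2 /(congr1 val) /= /val_inj/enum_rank_inj. Qed.

Definition big_colouring (q : binom G S A') := set_code (orbit_colours (repr q)).

Lemma orbit_colours_comp u a : G A' a -> orbit_colours (comp u a) = orbit_colours u.
Proof.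
move=> Ga; apply/setP => x; apply/imsetP/imsetP => -[j _ ->].
  have [j' dj'] := grp_dF _ (grp_comp C G A' _ _ Ga (dF_grp j)).
  by exists j' => //; rewrite dj' compA.
have [b Gb [ab _]] := grp_inv C G A' a Ga.
have [j' dj'] := grp_dF _ (grp_comp C G A' _ _ Gb (dF_grp j)).
by exists j' => //; rewrite dj' compA -(compA u) ab compm1.
Qed.

Lemma big_colouringE u : big_colouring (cls G u) = set_code (orbit_colours u).
Proof.
rewrite /big_colouring.
have /cls_eqP[a Ga ->] : cls G (repr (cls G u)) = cls G u by rewrite cls_repr.
by rewrite orbit_colours_comp.
Qed.

Lemma borel_approx_colour x : borel_set [set u : hom A' S | approx_colour u = x].
Proof.
rewrite (_ : [set u | _] = \bigcup_(D in inD)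
    [set u | exists2 phi : hom A D, pos_colour phi = x & Phi A u = existT _ D phi]).
  apply: (@borel_bigcup_countable _ _ inD) => [|D inD_D]; first by case: finD => _ [_ []].
  by apply: appr.2.2.1 => //; exact: (open_hom finD _ (haus A D)).
apply/seteqP; split=> u /=.
  move=> <-; exists (projT1 (Phi A u)); first exact: appr.2.1.
  by exists (projT2 (Phi A u)) => //; case: (Phi A u).
by case=> D _ [phi <- uE]; rewrite /approx_colour uE.
Qed.

Lemma borel_mem_orbit_colours x :
  borel_set [set u : hom A' S | x \in orbit_colours u].
Proof.
rewrite (_ : [set u | _] = \bigcup_(j in [set: 'I_g'])
    ((fun u => comp u (dF j)) @^-1` [set u | approx_colour u = x])).
  apply: borel_bigcup_countable => // j _.
  by apply: borel_preimage; [exact: precomp_continuous | exact: borel_approx_colour].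
apply/seteqP; split=> u /=; first by case/imsetP=> j _ ->; exists j.
by case=> j _ /= <-; apply/imsetP; exists j.
Qed.

Lemma borel_big_colouring i : borel_set (big_colouring @^-1` [set i]).
Proof.
apply: (borel_quotient (finite_grp finD G inA') (haus A' S) _ second_countable_A').
rewrite (_ : _ @^-1` _ = \bigcup_(s in [set s | set_code s = i])
    \bigcap_(x in [set: colour]) (if x \in s then [set u | x \in orbit_colours u]
                                  else ~` [set u | x \in orbit_colours u])).
  apply: borel_bigcup_countable => // s _; apply: borel_bigcap_countable => // x _.
  by case: ifP => _; [|apply: borelC]; exact: borel_mem_orbit_colours.
apply/seteqP; split=> u /=; rewrite big_colouringE.
  by move=> <-; exists (orbit_colours u) => // x _; case: ifP => // /negP.
case=> s /= <- sE; congr set_code; apply/setP => x.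
by case: (x \in s) (sE x Logic.I) => [->|/negP/negbTE].
Qed.

Definition pos_colours {B D : C} (h : hom B D) : {set colour} :=
  [set x | `[< exists f : hom A B, pos_colour (comp h f) = x >]]%SET.

Lemma ncolors_mul_le {B D : C} (h : hom B D) :
  (ncolors (chi D) h * g <= #|pos_colours h|)%N.
Proof.
rewrite -[g in (_ * g)%N]card_ord -cardsT -cardsX; apply: subset_leq_card.
apply/fintype.subsetP => -[i j]; rewrite !inE andbT => /asboolP[f chi_f].
have [a Ga idx_j] := orbit_index_onto (comp h f) j.
by exists (comp f a); rewrite /pos_colour compA cls_comp // chi_f idx_j.
Qed.

Definition orbit_colour_sets (w : hom S S) : {set {set colour}} :=
  [set s | `[< exists f : hom A' S, orbit_colours (comp w f) = s >]]%SET.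

Lemma card_orbit_colours u : (#|orbit_colours u| <= g')%N.
Proof. by apply: leq_trans (leq_imset_card _ _) _; rewrite card_ord. Qed.

Lemma card_orbit_colour_sets w :
  (#|orbit_colour_sets w| <= ncolors big_colouring w)%N.
Proof.
rewrite -(card_imset _ set_code_inj); apply: subset_leq_card.
apply/fintype.subsetP => _ /imsetP[s + ->]; rewrite !inE => -[f <-].
by exists f; exact: big_colouringE.
Qed.

Lemma pos_colours_approx {B : C} (inB : inD B) (w : hom S S) (v : hom (F B) S) :
  pos_colours (projT2 (Phi B (comp w v))) \subset
    (\bigcup_(s in orbit_colour_sets w) s)%SET.
Proof.
apply/fintype.subsetP => x; rewrite inE => /asboolP[f <-].
have [f' Phi_f'] := appr.2.2.2 A B f (comp w v) inA inB.
apply/bigcupP; exists (orbit_colours (comp w (comp v f'))).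
  by rewrite inE; apply/asboolP; exists (comp v f').
have [j0 dj0] := grp_dF _ (grp_id C G A').
by apply/imsetP; exists j0 => //; rewrite dj0 compm1 /approx_colour compA Phi_f'.
Qed.

Lemma ncolors_pullback {B : C} (inB : inD B) (w : hom S S) :
  exists2 D : C, inD D & exists h : hom B D,
    (ncolors (chi D) h * g <= ncolors big_colouring w * g')%N.
Proof.
have [v] := univ _ (appr.1 B inB).
exists (projT1 (Phi B (comp w v))); first exact: appr.2.1.
exists (projT2 (Phi B (comp w v))).
apply: leq_trans (ncolors_mul_le _) _.
apply: leq_trans (subset_leq_card (pos_colours_approx inB w v)) _.
have card_s s : s \in orbit_colour_sets w -> (#|s| <= g')%N.
  by rewrite inE => /asboolP[f <-]; exact: card_orbit_colours.
apply: leq_trans (card_bigcup_le _ id g' card_s) _.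
by rewrite leq_mul2r card_orbit_colour_sets orbT.
Qed.

End Colouring.

Context {n : nat}.
Hypothesis big_n : forall k, (2 <= k)%N -> forall chi : binom G S A' -> 'I_k,
  (forall i, borel_set (chi @^-1` [set i])) -> exists w : hom S S, (ncolors chi w <= n)%N.

Lemma small_ramsey_bound k (B : C) : inD B -> exists2 D : C, inD D &
  forall chi : binom G D A -> 'I_k, exists w : hom B D, (ncolors chi w <= n * g' %/ g)%N.
Proof.
move=> inB; case: k => [|k].
  exists B => // chi; exists (idm B).
  by apply: leq_trans (max_card _) _; rewrite card_ord.
apply: contrapT => no_D.
have bad (D : C) : exists chi : binom G D A -> 'I_k.+1,
    inD D -> forall h : hom B D, (n * g' %/ g < ncolors chi h)%N.
  have [inD_D|notD] := pselect (inD D); last by exists (fun=> ord0).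
  apply: contrapT => /forallNP good; apply: no_D; exists D => // chi.
  have /not_implyP[_ /existsNP[h]] := good chi.
  by exists h; rewrite leqNgt; apply/negP.
pose chi (D : C) := projT1 (cid (bad D)).
have [w le_w] : exists w : hom S S, (ncolors (big_colouring chi) w <= n)%N.
  by apply: big_n (borel_big_colouring chi).
have [D inD_D [h le_h]] := ncolors_pullback chi inB w.
have lt_ch : (n * g' < ncolors (chi D) h * g)%N.
  apply: leq_trans (ltn_ceil _ g_gt0) _.
  by rewrite leq_mul2r (projT2 (cid (bad D)) inD_D h) orbT.
have := leq_trans lt_ch (leq_trans le_h (leq_mul le_w (leqnn g'))).
by rewrite ltnn.
Qed.

Lemma small_ramsey_deg_le :
  (small_ramsey_deg inD G A <= (g'%:R / g%:R)%:E * (n%:R : rat)%:E)%E.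
Proof.
have t_gt0 : (0 < n * g' %/ g)%N.
  have [D _ bound] := small_ramsey_bound 1 A inA.
  have [w le_w] := bound (fun=> ord0).
  apply: leq_trans le_w; rewrite card_gt0; apply/set0Pn; exists ord0.
  by rewrite inE; apply/asboolP; exists (idm A).
apply: le_trans (to_ext_least_le _ _ (conj t_gt0 small_ramsey_bound)) _.
rewrite -EFinM lee_fin mulrAC ler_pdivlMr ?ltr0n ?g_gt0 // -!natrM ler_nat.
by rewrite [(g' * n)%N]mulnC leq_divM.
Qed.

End SmallFromBig.

Lemma small_ramsey_deg_le_big {C : TopCat} {inD : C -> Prop} {S : C} {F : C -> C}
    {Phi : forall A : C, hom (F A) S -> {B : C & hom A B}} {G : GroupFamily C} {A : C} :
  all_mono C -> (forall A B : C, hausdorff_space (hom A B)) ->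
  category_of_finite_objects inD -> universal inD S -> approximable inD S F Phi ->
  inD A -> @second_countable (hom (F A) S) ->
  (small_ramsey_deg inD G A <=
     ((set_card (G (F A)))%:R / (set_card (G A))%:R)%:E * big_ramsey_deg G (F A) S)%E.
Proof.
move=> mono haus finD univ appr inA second_countable_FA.
have [inFA finGA] := (appr.1 A inA, finite_grp finD G inA).
have finGFA := finite_grp finD G inFA.
have [dA [dA_inj dA_grp grp_dA]] := finite_set_enum finGA.
have [dF [_ dF_grp grp_dF]] := finite_set_enum finGFA.
rewrite /big_ramsey_deg; case E: least => [n|] /=.
  exact: (small_ramsey_deg_le mono haus finD univ appr inA second_countable_FA
    dA_inj dA_grp grp_dA dF_grp grp_dF (leastP E).2).
rewrite mulry gtr0_sg ?mul1e ?leey // divr_gt0 // ltr0n.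
  exact: set_card_gt0 finGFA (grp_id C G (F A)).
exact: set_card_gt0 finGA (grp_id C G A).
Qed.

Theorem corollary5p6 (C : TopCat) (inD : C -> Prop) (S : C) (F : C -> C)
    (Phi : forall A : C, hom (F A) S -> {B : C & hom A B})
    (G : GroupFamily C) :
  all_mono C ->
  (forall A B : C, hausdorff_space (hom A B)) ->
  skeletal inD ->
  category_of_finite_objects inD ->
  universal inD S ->
  approximable inD S F Phi ->
  (forall A : C, inD A ->
     locally_compact [set: hom A S] /\ @second_countable (hom A S) /\
     hausdorff_space (hom A S)) ->
  (forall A : C, inD A ->
     finite_set (G A) /\ finite_set (G (F A)) /\
     (small_ramsey_deg inD G A <=
        ((set_card (G (F A)))%:R / (set_card (G A))%:R)%:E
          * big_ramsey_deg G (F A) S)%E) /\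
  ((forall A : C, inD A -> (big_ramsey_deg G A S < +oo)%E) ->
   forall A : C, inD A -> (small_ramsey_deg inD G A < +oo)%E).
Proof.
move=> mono haus _ finD univ appr top.
have small_le_big A : inD A -> (small_ramsey_deg inD G A <=
    ((set_card (G (F A)))%:R / (set_card (G A))%:R)%:E * big_ramsey_deg G (F A) S)%E.
  move=> inA; have [_ [second_countable_FA _]] := top _ (appr.1 A inA).
  exact: small_ramsey_deg_le_big mono haus finD univ appr inA second_countable_FA.
split=> [A inA | big_fin A inA].
  split; first exact: (finite_grp finD G inA).
  by split; [exact: (finite_grp finD G (appr.1 A inA)) | exact: small_le_big].
apply: le_lt_trans (small_le_big A inA) _.
by apply: lte_mul_pinfty; [rewrite lee_fin divr_ge0 | | exact: big_fin (appr.1 A inA)].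
Qed.
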